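(* In the setting of the context, assume (A1) and (A2) hold. Let $\{z^k\}$ be generated by SAPS, let $N>0$ be an integer, let $\widetilde z^N=(\widetilde x^N,\widetilde y^N)$ be the averaged iterate, and set $\Delta_k=G(z^k,\xi_k)-g(z^k)$. Then for any $z=(x,y)\in\mathbb{Z}$, $$\phi(\widetilde x^N,y)-\phi(x,\widetilde y^N)\le\Big(2\sum_{k=1}^N\gamma_k\Big)^{-1}\Big[\|z-z^1\|^2-\|z^{N+1}-z\|^2+\sum_{k=1}^N\big(\gamma_k^2\|v(z^k)+G(z^k,\xi_k)\|^2+2\gamma_k\langle\Delta_k,z-z^k\rangle\big)\Big]$$ holds for any $v(z^k)=(v_x(x^k),v_y(y^k))$ with $v_x(x^k)\in\partial\vartheta(x^k)$ and $v_y(y^k)\in\partial\omega(y^k)$.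
   Context: Setting: $\vartheta:\mathbb{R}^n\to\mathbb{R}\cup\{+\infty\}$, $\omega:\mathbb{R}^m\to\mathbb{R}\cup\{+\infty\}$ proper lower semicontinuous convex; $\xi$ random vector supported on $\Xi\subseteq\mathbb{R}^q$; $F:\mathbb{R}^n\times\mathbb{R}^m\times\Xi\to\mathbb{R}$, $f(x,y)=\mathbb{E}[F(x,y,\xi)]$ finite, continuous, convex in $x$, concave in $y$ on $\mathbb{Z}:=\mathrm{dom}\,\vartheta\times\mathrm{dom}\,\omega$; $\phi(x,y)=\vartheta(x)+f(x,y)-\omega(y)$; $z=(x,y)$; $\mathrm{Prox}_{\gamma h}(u)=\mathrm{argmin}_w\{h(w)+\frac{1}{2\gamma}\|w-u\|^2\}$. (A1) Samples $\xi_1,\xi_2,\dots$ are i.i.d. copies of $\xi$. (A2) An oracle returns, for $(x,y,\xi)\in\mathbb{Z}\times\Xi$, $G_x(x,y,\xi)\in\mathbb{R}^n$, $G_y(x,y,\xi)\in\mathbb{R}^m$ with $g_x(x,y):=\mathbb{E}[G_x(x,y,\xi)]\in\partial_xf(x,y)$ and $g_y(x,y):=\mathbb{E}[G_y(x,y,\xi)]$, $-g_y(x,y)\in\partial_y[-f](x,y)$. Write $G(z,\xi)=(G_x(z,\xi),-G_y(z,\xi))$, $g(z)=(g_x(z),-g_y(z))$. SAPS algorithm: given $z^1=(x^1,y^1)\in\mathbb{R}^n\times\mathbb{R}^m$ and step sizes $\gamma_k>0$, for $k=1,2,\dots$: $x^{k+1}=\mathrm{Prox}_{\gamma_k\vartheta}(x^k-\gamma_kG_x(x^k,y^k,\xi_k))$,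 $y^{k+1}=\mathrm{Prox}_{\gamma_k\omega}(y^k+\gamma_kG_y(x^k,y^k,\xi_k))$. Averaged iterate $\widetilde z^N=\sum_{j=1}^N\lambda_j^Nz^j$, $\lambda_j^N=\gamma_j/\sum_{i=1}^N\gamma_i$. *)

From HB Require Import structures.
From mathcomp Require Import all_boot all_order all_algebra.
From mathcomp Require Import all_classical all_reals all_analysis.
Set Implicit Arguments.
Unset Strict Implicit.
Unset Printing Implicit Defensive.
Import Order.TTheory GRing.Theory Num.Theory.
Import numFieldNormedType.Exports.
Local Open Scope classical_set_scope.
Local Open Scope ring_scope.

Section SAPSDefs.
Variable R : realType.

Definition dotv {n : nat} (u v : 'rV[R]_n) : R := \sum_(i < n) u 0 i * v 0 i.
Definition sqnorm {n : nat} (u : 'rV[R]_n) : R := dotv u u.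

Definition edom {n : nat} (h : 'rV[R]_n -> \bar R) : set 'rV[R]_n :=
  [set x | (h x < +oo)%E].

Definition proper_fun {n : nat} (h : 'rV[R]_n -> \bar R) : Prop :=
  (exists x, (h x < +oo)%E) /\ (forall x, (-oo < h x)%E).

Definition econvex {n : nat} (h : 'rV[R]_n -> \bar R) : Prop :=
  forall (x y : 'rV[R]_n) (t : R), 0 < t -> t < 1 ->
    (h (t *: x + (1 - t) *: y)%R <= t%:E * h x + (1 - t)%R%:E * h y)%E.

Definition subgrad {n : nat} (h : 'rV[R]_n -> \bar R) (x v : 'rV[R]_n) : Prop :=
  h x \is a fin_num /\
  forall u, (h x + (dotv v (u - x)%R)%:E <= h u)%E.

Definition is_prox {n : nat} (h : 'rV[R]_n -> \bar R) (gam : R) (u p : 'rV[R]_n) : Prop :=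
  forall w, (h p + ((2 * gam)^-1 * sqnorm (p - u)%R)%:E
             <= h w + ((2 * gam)^-1 * sqnorm (w - u)%R)%:E)%E.

Definition avg_iter {n : nat} (gam : nat -> R) (N : nat) (z : nat -> 'rV[R]_n) : 'rV[R]_n :=
  \sum_(1 <= j < N.+1) (gam j / \sum_(1 <= i < N.+1) gam i) *: z j.

End SAPSDefs.

Definition iid_copies (R : realType) (dT : measure_display) (T : measurableType dT)
  (d : measure_display) (Xi : measurableType d) (P : probability T R)
  (xi0 : T -> Xi) (xi : nat -> T -> Xi) : Prop :=
  measurable_fun setT xi0 /\
  (forall k, (0 < k)%N -> measurable_fun setT (xi k)) /\
  (forall k (A : set Xi), (0 < k)%N -> measurable A ->
     P (xi k @^-1` A) = P (xi0 @^-1` A)) /\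
  (forall (s : seq nat) (A : nat -> set Xi), uniq s -> all (fun k => 0 < k)%N s ->
     (forall k, measurable (A k)) ->
     P (\bigcap_(k in [set` s]) (xi k @^-1` A k)) = (\prod_(k <- s) P (xi k @^-1` A k))%E).

(* The bound holds pathwise, for every realisation of the samples.
   Optimality of p = Prox_{γθ}(x^k - γG) together with a subgradient v of θ at x^k gives the
   three-point inequality
     γ (θ(x^k) - θ(x)) <= (|x - x^k|^2 - |x - p|^2) / 2 + γ^2 |v + G|^2 / 2 + γ <G, x - x^k>,
   and likewise for ω. Adding the subgradient inequalities of f(., y^k) and -f(x^k, .) at z^k,
   whose gradient g differs from G by Δ_k, bounds 2 γ_k (φ(x^k, y) - φ(x, y^k)) by
   |z - z^k|^2 - |z - z^{k+1}|^2 plus the k-th error term. This telescopes over k, and Jensen's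
   inequality for the convex functions φ(., y) and -φ(x, .) passes to the averaged iterate. *)

From HB Require Import structures.
From mathcomp Require Import all_boot all_order all_algebra.
From mathcomp Require Import all_classical all_reals all_analysis.
From mathcomp Require Import ring lra.
Import Order.TTheory GRing.Theory Num.Theory.
Import numFieldNormedType.Exports.
Local Open Scope classical_set_scope.
Local Open Scope ring_scope.
Set Implicit Arguments.
Unset Strict Implicit.

Ltac coordinatewise := rewrite /sqnorm /dotv;
  repeat (rewrite -sumrN || rewrite mulr_sumr || rewrite mulr_suml || rewrite -big_split);
  apply: eq_bigr => i _; rewrite !mxE /=.

Section ConvexAnalysis.
Variable R : realType.

Lemma sqnorm_ge0 n (u : 'rV[R]_n) : 0 <= sqnorm u.
Proof. by rewrite /sqnorm /dotv sumr_ge0 // => i _; rewrite -expr2 sqr_ge0. Qed.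

Lemma sqnormBC n (u v : 'rV[R]_n) : sqnorm (u - v) = sqnorm (v - u).
Proof. by coordinatewise; ring. Qed.

Lemma dotvDl n (a b c : 'rV[R]_n) : dotv (a + b) c = dotv a c + dotv b c.
Proof. by coordinatewise; rewrite mulrDl. Qed.

Lemma ler0_vanishing (x c : R) : (forall t, 0 < t < 1 -> x <= t * c) -> x <= 0.
Proof.
move=> small; rewrite leNgt; apply/negP => x_gt0.
(* t c <= t |c| < t (|c| + x) = x / 2 for this t *)
set t := x / (2 * (`|c| + x)).
have cx_gt0 : 0 < `|c| + x by rewrite ltr_wpDl.
have t_gt0 : 0 < t by rewrite divr_gt0 // mulr_gt0.
have t_lt1 : t < 1 by rewrite ltr_pdivrMr ?mulr_gt0 // mul1r; have := normr_ge0 c; lra.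
have tx : t * `|c| + t * x = x / 2 by rewrite -mulrDr /t; field; rewrite gt_eqF.
have tc : t * c <= t * `|c| by apply: ler_wpM2l; [exact: ltW | exact: ler_norm].
have := small t; rewrite t_gt0 t_lt1 => /(_ isT).
have : 0 < t * x by rewrite mulr_gt0.
lra.
Qed.

Lemma sumr_nat_gt0 (g : nat -> R) N : (0 < N)%N -> (forall k, (0 < k)%N -> 0 < g k) ->
  0 < \sum_(1 <= k < N.+1) g k.
Proof.
move=> N_gt0 g_gt0; rewrite big_ltn ?ltnS // ltr_pwDl ?g_gt0 // big_nat_cond.
by apply: sumr_ge0 => k /andP[/andP[k_gt1 _] _]; rewrite ltW // g_gt0 // ltnW.
Qed.

Definition convex_on (V : lmodType R) (D : set V) (h : V -> R) : Prop :=
  forall a1 a2 t, D a1 -> D a2 -> 0 < t < 1 ->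
    D (t *: a1 + (1 - t) *: a2) /\ h (t *: a1 + (1 - t) *: a2) <= t * h a1 + (1 - t) * h a2.

Lemma convex_on_wavg2 (V : lmodType R) (D : set V) (h : V -> R) a b u v :
  convex_on D h -> 0 < a -> 0 < b -> D u -> D v ->
  D ((a + b)^-1 *: (a *: u + b *: v)) /\
  (a + b) * h ((a + b)^-1 *: (a *: u + b *: v)) <= a * h u + b * h v.
Proof.
move=> h_convex a_gt0 b_gt0 Du Dv; have ab_gt0 : 0 < a + b by rewrite addr_gt0.
set t := a / (a + b).
have t01 : 0 < t < 1 by rewrite divr_gt0 //= ltr_pdivrMr // mul1r ltrDl.
have -> : (a + b)^-1 *: (a *: u + b *: v) = t *: u + (1 - t) *: v.
  by rewrite scalerDr !scalerA /t; congr (_ *: _ + _ *: _); field; rewrite gt_eqF.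
have [Dt ht] := h_convex u v t Du Dv t01; split => //.
have -> : a * h u + b * h v = (a + b) * (t * h u + (1 - t) * h v).
  by rewrite /t; field; rewrite gt_eqF.
by rewrite ler_wpM2l // ltW.
Qed.

Lemma convex_on_jensen (V : lmodType R) (D : set V) (h : V -> R) (g : nat -> R) (z : nat -> V) N :
  convex_on D h -> (0 < N)%N -> (forall k, (0 < k)%N -> 0 < g k) ->
  (forall k, (0 < k)%N -> (k <= N)%N -> D (z k)) ->
  let zt := \sum_(1 <= j < N.+1) (g j / \sum_(1 <= i < N.+1) g i) *: z j in
  D zt /\ (\sum_(1 <= i < N.+1) g i) * h zt <= \sum_(1 <= j < N.+1) g j * h (z j).
Proof.
move=> h_convex N_gt0 g_gt0 Dz zt.
have -> : zt = (\sum_(1 <= i < N.+1) g i)^-1 *: \sum_(1 <= j < N.+1) g j *: z j.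
  by rewrite scaler_sumr; apply: eq_bigr => j _; rewrite scalerA mulrC.
case: N N_gt0 Dz {zt} => // N _; elim: N => [|N IH] Dz.
  rewrite !big_nat1 scalerA mulVf ?gt_eqF ?g_gt0 // scale1r; split => //; exact: Dz.
have [IHD IHh] := IH (fun k k_gt0 kN => Dz k k_gt0 (leqW kN)).
rewrite !(big_nat_recr N.+2) //=.
have S_gt0 := sumr_nat_gt0 (ltn0Sn N) g_gt0.
have := convex_on_wavg2 h_convex S_gt0 (g_gt0 N.+2 isT) IHD (Dz N.+2 isT (leqnn _)).
rewrite scalerA mulfV ?gt_eqF // scale1r => -[Dnext hnext]; split => //.
by apply: le_trans hnext _; rewrite lerD2r.
Qed.

Lemma edom_fin_num n (h : 'rV[R]_n -> \bar R) a : proper_fun h -> edom h a -> h a \is a fin_num.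
Proof. by move=> [_ h_gtNy] ha; rewrite fin_numElt h_gtNy. Qed.

Lemma fin_num_edom n (h : 'rV[R]_n -> \bar R) a : h a \is a fin_num -> edom h a.
Proof. by rewrite fin_numElt => /andP[]. Qed.

Lemma econvex_convex_on n (h : 'rV[R]_n -> \bar R) :
  proper_fun h -> econvex h -> convex_on (edom h) (fine \o h).
Proof.
move=> h_proper h_convex a1 a2 t ha1 ha2 /andP[t_gt0 t_lt1].
have := h_convex a1 a2 t t_gt0 t_lt1.
rewrite -(fineK (edom_fin_num h_proper ha1)) -(fineK (edom_fin_num h_proper ha2)) -!EFinM -EFinD.
move=> hle; have hq : edom h (t *: a1 + (1 - t) *: a2) by apply: le_lt_trans hle _; rewrite ltry.
by split => //=; rewrite -lee_fin fineK ?edom_fin_num.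
Qed.

Lemma is_prox_edom n (h : 'rV[R]_n -> \bar R) g u p : proper_fun h -> is_prox h g u p -> edom h p.
Proof.
move=> [[a ha] _] hp; rewrite /edom /=; move: (hp a).
case: (h p) => [r _ | /= | //]; first exact: ltry.
by move=> /le_lt_trans/(_ (lte_add_pinfty ha (ltry _))); rewrite ltxx.
Qed.

Lemma is_prox_optimality n (h : 'rV[R]_n -> \bar R) g u p w :
  proper_fun h -> econvex h -> 0 < g -> is_prox h g u p -> edom h w ->
  g * (fine (h p) - fine (h w)) <= dotv (p - u) (w - p).
Proof.
move=> h_proper h_convex g_gt0 hp hw; have hpd := is_prox_edom h_proper hp.
rewrite -subr_le0; apply: (@ler0_vanishing _ (sqnorm (w - p) / 2)) => t t01.
have [hq hq_le] := econvex_convex_on h_proper h_convex hw hpd t01.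
move: (hp (t *: w + (1 - t) *: p)) hq_le => /=.
rewrite -(fineK (edom_fin_num h_proper hpd)) -(fineK (edom_fin_num h_proper hq)) -!EFinD lee_fin.
have -> : sqnorm (t *: w + (1 - t) *: p - u)
    = sqnorm (p - u) + 2 * t * dotv (p - u) (w - p) + t ^+ 2 * sqnorm (w - p).
  by coordinatewise; ring.
move=> /(ler_wpM2l (ltW (mulr_gt0 (ltr0n _ 2) g_gt0))).
rewrite !mulrDr !mulrA mulfV ?gt_eqF ?mulr_gt0 // !mul1r.
case/andP: t01 => t_gt0 _; nra.
Qed.

Lemma prox_step_bound n (h : 'rV[R]_n -> \bar R) g xk p v G w :
  proper_fun h -> econvex h -> 0 < g ->
  is_prox h g (xk - g *: G) p -> subgrad h xk v -> edom h w ->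
  g * (fine (h xk) - fine (h w)) <= (sqnorm (w - xk) - sqnorm (w - p)) / 2
     + g ^+ 2 * sqnorm (v + G) / 2 + g * dotv G (w - xk).
Proof.
move=> h_proper h_convex g_gt0 hp [hxk v_sub] hw.
have opt := is_prox_optimality h_proper h_convex g_gt0 hp hw.
move: (v_sub p); rewrite -(fineK hxk) -(fineK (edom_fin_num h_proper (is_prox_edom h_proper hp))).
rewrite -EFinD lee_fin => /(ler_wpM2l (ltW g_gt0)) v_le.
have -> : (sqnorm (w - xk) - sqnorm (w - p)) / 2 + g ^+ 2 * sqnorm (v + G) / 2 + g * dotv G (w - xk)
    = dotv (p - (xk - g *: G)) (w - p) - g * dotv v (p - xk) + sqnorm (p - xk + g *: (v + G)) / 2.
  by coordinatewise; field.
have := sqnorm_ge0 (p - xk + g *: (v + G)); lra.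
Qed.

End ConvexAnalysis.

Section SAPSPathwiseBound.
Variables (R : realType) (n m : nat).
Variables (theta : 'rV[R]_n -> \bar R) (omega : 'rV[R]_m -> \bar R) (f : 'rV[R]_n -> 'rV[R]_m -> R).
Variables (gx : 'rV[R]_n -> 'rV[R]_m -> 'rV[R]_n) (gy : 'rV[R]_n -> 'rV[R]_m -> 'rV[R]_m).
Variables (gam : nat -> R) (N : nat) (xs : nat -> 'rV[R]_n) (ys : nat -> 'rV[R]_m).
Variables (Gxs vx : nat -> 'rV[R]_n) (Gys vy : nat -> 'rV[R]_m).
Variables (x : 'rV[R]_n) (y : 'rV[R]_m).

Hypothesis theta_proper : proper_fun theta.
Hypothesis theta_convex : econvex theta.
Hypothesis omega_proper : proper_fun omega.
Hypothesis omega_convex : econvex omega.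
Hypothesis x_dom : edom theta x.
Hypothesis y_dom : edom omega y.
Hypothesis f_convex_in_x : forall a1 a2 t, edom theta a1 -> edom theta a2 -> 0 <= t -> t <= 1 ->
  f (t *: a1 + (1 - t) *: a2) y <= t * f a1 y + (1 - t) * f a2 y.
Hypothesis f_concave_in_y : forall b1 b2 t, edom omega b1 -> edom omega b2 -> 0 <= t -> t <= 1 ->
  t * f x b1 + (1 - t) * f x b2 <= f x (t *: b1 + (1 - t) *: b2).
Hypothesis gx_subgrad : forall a b, edom theta a -> edom omega b ->
  f a b + dotv (gx a b) (x - a) <= f x b.
Hypothesis gy_subgrad : forall a b, edom theta a -> edom omega b ->
  - f a b + dotv (- gy a b) (y - b) <= - f a y.
Hypothesis gam_gt0 : forall k, (0 < k)%N -> 0 < gam k.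
Hypothesis xs_prox : forall k, (0 < k)%N -> is_prox theta (gam k) (xs k - gam k *: Gxs k) (xs k.+1).
Hypothesis ys_prox : forall k, (0 < k)%N -> is_prox omega (gam k) (ys k + gam k *: Gys k) (ys k.+1).
Hypothesis N_gt0 : (0 < N)%N.
Hypothesis vx_subgrad : forall k, (0 < k)%N -> (k <= N)%N -> subgrad theta (xs k) (vx k).
Hypothesis vy_subgrad : forall k, (0 < k)%N -> (k <= N)%N -> subgrad omega (ys k) (vy k).

Definition phi a b := fine (theta a) + f a b - fine (omega b).

Definition dist2 k := sqnorm (x - xs k) + sqnorm (y - ys k).

Definition step_error k :=
  gam k ^+ 2 * (sqnorm (vx k + Gxs k) + sqnorm (vy k - Gys k))
  + 2 * gam k * (dotv (Gxs k - gx (xs k) (ys k)) (x - xs k)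
                 + dotv (- (Gys k - gy (xs k) (ys k))) (y - ys k)).

Lemma xs_dom k : (0 < k)%N -> (k <= N)%N -> edom theta (xs k).
Proof. by move=> k_gt0 kN; apply: fin_num_edom; case: (vx_subgrad k_gt0 kN). Qed.

Lemma ys_dom k : (0 < k)%N -> (k <= N)%N -> edom omega (ys k).
Proof. by move=> k_gt0 kN; apply: fin_num_edom; case: (vy_subgrad k_gt0 kN). Qed.

Lemma phi_convex_in_x : convex_on (edom theta) (phi^~ y).
Proof.
move=> a1 a2 t ha1 ha2 t01; have /andP[t_gt0 t_lt1] := t01.
have [hq hq_le] := econvex_convex_on theta_proper theta_convex ha1 ha2 t01.
split => //; have := f_convex_in_x ha1 ha2 (ltW t_gt0) (ltW t_lt1).
by move: hq_le; rewrite /phi /=; lra.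
Qed.

Lemma phi_concave_in_y : convex_on (edom omega) (fun b => - phi x b).
Proof.
move=> b1 b2 t hb1 hb2 t01; have /andP[t_gt0 t_lt1] := t01.
have [hq hq_le] := econvex_convex_on omega_proper omega_convex hb1 hb2 t01.
split => //; have := f_concave_in_y hb1 hb2 (ltW t_gt0) (ltW t_lt1).
by move: hq_le; rewrite /phi /=; lra.
Qed.

Lemma saps_step_bound k : (0 < k)%N -> (k <= N)%N ->
  2 * gam k * (phi (xs k) y - phi x (ys k)) <= dist2 k - dist2 k.+1 + step_error k.
Proof.
move=> k_gt0 kN; have g_gt0 := gam_gt0 k_gt0.
have x_step := prox_step_bound theta_proper theta_convex g_gt0 (xs_prox k_gt0) (vx_subgrad k_gt0 kN) x_dom.
have ys_prox' : is_prox omega (gam k) (ys k - gam k *: - Gys k) (ys k.+1).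
  by rewrite scalerN opprK; exact: ys_prox.
have y_step := prox_step_bound omega_proper omega_convex g_gt0 ys_prox' (vy_subgrad k_gt0 kN) y_dom.
have /(ler_wpM2l (ltW g_gt0)) fx_sub := gx_subgrad (xs_dom k_gt0 kN) (ys_dom k_gt0 kN).
have /(ler_wpM2l (ltW g_gt0)) fy_sub := gy_subgrad (xs_dom k_gt0 kN) (ys_dom k_gt0 kN).
(* split G = Δ_k + g; the g-parts cancel against the subgradient inequalities of f *)
rewrite -[in dotv (Gxs k) _](subrK (gx (xs k) (ys k)) (Gxs k)) dotvDl in x_step.
rewrite -[in dotv (- Gys k) _](subrK (- gy (xs k) (ys k)) (- Gys k)) -opprD dotvDl in y_step.
rewrite /phi /dist2 /step_error.
move: x_step y_step fx_sub fy_sub; rewrite !mulrDr ?mulrN; lra.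
Qed.

Lemma saps_sum_bound :
  2 * \sum_(1 <= k < N.+1) gam k * (phi (xs k) y - phi x (ys k))
  <= dist2 1 - dist2 N.+1 + \sum_(1 <= k < N.+1) step_error k.
Proof.
have telescope : \sum_(1 <= k < N.+1) (dist2 k - dist2 k.+1) = dist2 1 - dist2 N.+1.
  by rewrite -[RHS]opprB -telescope_sumr // -sumrN; apply: eq_bigr => k _; rewrite opprB.
rewrite mulr_sumr -telescope -big_split /=.
by apply: ler_sum_nat => k /andP[k_gt0 kN]; rewrite mulrA saps_step_bound.
Qed.

Lemma saps_avg_bound :
  [/\ edom theta (avg_iter gam N xs), edom omega (avg_iter gam N ys) &
      (\sum_(1 <= k < N.+1) gam k) * (phi (avg_iter gam N xs) y - phi x (avg_iter gam N ys))
      <= \sum_(1 <= k < N.+1) gam k * (phi (xs k) y - phi x (ys k))].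
Proof.
have [xt_dom Jx] := convex_on_jensen phi_convex_in_x N_gt0 gam_gt0 xs_dom.
have [yt_dom Jy] := convex_on_jensen phi_concave_in_y N_gt0 gam_gt0 ys_dom.
split => //; rewrite [X in _ <= X](eq_bigr (fun k => gam k * phi (xs k) y + gam k * - phi x (ys k))).
  by rewrite big_split /=; move: Jx Jy => /=; rewrite /avg_iter; lra.
by move=> k _; rewrite mulrDr.
Qed.

Lemma saps_gap_bound :
  ((theta (avg_iter gam N xs) + (f (avg_iter gam N xs) y)%:E - omega y)
   - (theta x + (f x (avg_iter gam N ys))%:E - omega (avg_iter gam N ys))
   <= ((2 * \sum_(1 <= k < N.+1) gam k)^-1 *
        (dist2 1 - (sqnorm (xs N.+1 - x) + sqnorm (ys N.+1 - y))
         + \sum_(1 <= k < N.+1) step_error k))%:E)%E.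
Proof.
have [xt_dom yt_dom avg_le] := saps_avg_bound.
have S_gt0 := sumr_nat_gt0 N_gt0 gam_gt0.
rewrite -(fineK (edom_fin_num theta_proper xt_dom)) -(fineK (edom_fin_num theta_proper x_dom)).
rewrite -(fineK (edom_fin_num omega_proper yt_dom)) -(fineK (edom_fin_num omega_proper y_dom)).
rewrite -!EFinD lee_fin ler_pdivlMl ?mulr_gt0 //.
rewrite (sqnormBC (xs N.+1)) (sqnormBC (ys N.+1)).
by move: saps_sum_bound avg_le; rewrite /phi /dist2; lra.
Qed.

End SAPSPathwiseBound.

Theorem proposition2p1
  (R : realType) (n m : nat)
  (d : measure_display) (Xi : measurableType d)
  (dT : measure_display) (T : measurableType dT) (P : probability T R)
  (xi0 : T -> Xi) (xi : nat -> T -> Xi)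
  (theta : 'rV[R]_n -> \bar R) (omega : 'rV[R]_m -> \bar R)
  (F : 'rV[R]_n -> 'rV[R]_m -> Xi -> R) (f : 'rV[R]_n -> 'rV[R]_m -> R)
  (Gx : 'rV[R]_n -> 'rV[R]_m -> Xi -> 'rV[R]_n)
  (Gy : 'rV[R]_n -> 'rV[R]_m -> Xi -> 'rV[R]_m)
  (gx : 'rV[R]_n -> 'rV[R]_m -> 'rV[R]_n)
  (gy : 'rV[R]_n -> 'rV[R]_m -> 'rV[R]_m)
  (gam : nat -> R) (N : nat) (w : T)
  (xs : nat -> 'rV[R]_n) (ys : nat -> 'rV[R]_m)
  (vx : nat -> 'rV[R]_n) (vy : nat -> 'rV[R]_m)
  (x : 'rV[R]_n) (y : 'rV[R]_m) :
  (* standing assumptions on theta, omega *)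
  proper_fun theta -> lower_semicontinuous theta -> econvex theta ->
  proper_fun omega -> lower_semicontinuous omega -> econvex omega ->
  (* f = E[F(.,.,xi)] finite, continuous, convex-concave on Z *)
  (forall a b, edom theta a -> edom omega b ->
     P.-integrable setT (fun t => (F a b (xi0 t))%:E) /\
     (f a b)%:E = (\int[P]_t (F a b (xi0 t))%:E)%E) ->
  {within [set p : 'rV[R]_n * 'rV[R]_m | edom theta p.1 /\ edom omega p.2],
     continuous (fun p => f p.1 p.2)} ->
  (forall b, edom omega b -> forall a1 a2 t, edom theta a1 -> edom theta a2 ->
     0 <= t -> t <= 1 -> f (t *: a1 + (1 - t) *: a2) b <= t * f a1 b + (1 - t) * f a2 b) ->
  (forall a, edom theta a -> forall b1 b2 t, edom omega b1 -> edom omega b2 ->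
     0 <= t -> t <= 1 -> t * f a b1 + (1 - t) * f a b2 <= f a (t *: b1 + (1 - t) *: b2)) ->
  (* (A1) *)
  iid_copies P xi0 xi ->
  (* (A2) *)
  (forall a b, edom theta a -> edom omega b ->
     (forall i, P.-integrable setT (fun t => (Gx a b (xi0 t) 0 i)%:E) /\
        (gx a b 0 i)%:E = (\int[P]_t (Gx a b (xi0 t) 0 i)%:E)%E) /\
     (forall j, P.-integrable setT (fun t => (Gy a b (xi0 t) 0 j)%:E) /\
        (gy a b 0 j)%:E = (\int[P]_t (Gy a b (xi0 t) 0 j)%:E)%E) /\
     (forall a', edom theta a' -> f a b + dotv (gx a b) (a' - a) <= f a' b) /\
     (forall b', edom omega b' -> - f a b + dotv (- gy a b) (b' - b) <= - f a b')) ->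
  (* SAPS iterates along the sample path w *)
  (forall k, (0 < k)%N -> 0 < gam k) ->
  (forall k, (0 < k)%N ->
     is_prox theta (gam k) (xs k - gam k *: Gx (xs k) (ys k) (xi k w)) (xs k.+1) /\
     is_prox omega (gam k) (ys k + gam k *: Gy (xs k) (ys k) (xi k w)) (ys k.+1)) ->
  (0 < N)%N ->
  (* arbitrary subgradients v(z^k) *)
  (forall k, (0 < k)%N -> (k <= N)%N -> subgrad theta (xs k) (vx k) /\ subgrad omega (ys k) (vy k)) ->
  (* z = (x, y) in Z *)
  edom theta x -> edom omega y ->
  let xt := avg_iter gam N xs in
  let yt := avg_iter gam N ys in
  ((theta xt + (f xt y)%:E - omega y) - (theta x + (f x yt)%:E - omega yt)
   <= ((2 * \sum_(1 <= k < N.+1) gam k)^-1 *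
        ((sqnorm (x - xs 1%N) + sqnorm (y - ys 1%N))
         - (sqnorm (xs N.+1 - x) + sqnorm (ys N.+1 - y))
         + \sum_(1 <= k < N.+1)
             (gam k ^+ 2 * (sqnorm (vx k + Gx (xs k) (ys k) (xi k w))
                            + sqnorm (vy k - Gy (xs k) (ys k) (xi k w)))
              + 2 * gam k *
                (dotv (Gx (xs k) (ys k) (xi k w) - gx (xs k) (ys k)) (x - xs k)
                 + dotv (- (Gy (xs k) (ys k) (xi k w) - gy (xs k) (ys k))) (y - ys k)))))%:E)%E.
Proof.
move=> theta_proper _ theta_convex omega_proper _ omega_convex _ _ f_convex f_concave _
  oracle gam_gt0 prox N_gt0 subgrads x_dom y_dom.
have g_subgrad a b (ha : edom theta a) (hb : edom omega b) := (oracle a b ha hb).2.2.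
exact: (saps_gap_bound (Gxs := fun k => Gx (xs k) (ys k) (xi k w))
  (Gys := fun k => Gy (xs k) (ys k) (xi k w)) theta_proper theta_convex omega_proper
  omega_convex x_dom y_dom (f_convex y y_dom) (f_concave x x_dom)
  (fun a b ha hb => (g_subgrad a b ha hb).1 x x_dom)
  (fun a b ha hb => (g_subgrad a b ha hb).2 y y_dom) gam_gt0
  (fun k k_gt0 => (prox k k_gt0).1) (fun k k_gt0 => (prox k k_gt0).2) N_gt0
  (fun k k_gt0 kN => (subgrads k k_gt0 kN).1) (fun k k_gt0 kN => (subgrads k k_gt0 kN).2)).
Qed.
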